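(* Let $G$ be a finite group and let $\phi=a_1\chi_1+\cdots+a_q\chi_q$ be a virtual character of $G$, where $a_i\in\mathbb{R}$ and $\chi_i$ are irreducible complex characters of $G$ with $n_i=\chi_i(1)$, $i=1,\dots,q$. Then for every $g\in G$, $$\mathbb{E}(\xi_{g,\phi})=\sum_{i=1}^q \frac{a_i}{n_i^2}\,\mathrm{Re}(\chi_i(g)).$$ If $\phi$ is non-negative, then for every $g\in G$, $$c(g)\;\le\;\frac{\mathbb{E}(\xi_{g,\phi})}{\phi(1)}\;=\;\frac{(a_1/n_1^2)\mathrm{Re}(\chi_1(g))+\cdots+(a_q/n_q^2)\mathrm{Re}(\chi_q(g))}{a_1n_1+\cdots+a_qn_q},$$ and in particular $$c(G)=c(1)\;\le\;\frac{a_1/n_1+\cdots+a_q/n_q}{a_1n_1+\cdots+a_qn_q}.$$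
   Context: $G$ is a finite group of order $m$; $G\times G$ carries the uniform probability measure (mass $1/m^2$ per point) and $\mathbb{E}$ denotes expectation with respect to it. For $g\in G$, $c(g)=|\{(x,y)\in G\times G:[x,y]=g\}|/|G\times G|$ and $c(G)=c(1)$. For a virtual character $\phi$ and $g\in G$, $\xi_{g,\phi}$ is the real random variable on $G\times G$ given by $\xi_{g,\phi}(a,b)=\mathrm{Re}\big(\phi([a,b]^{-1}g)\big)=\sum_i a_i\mathrm{Re}(\chi_i([a,b]^{-1}g))$. A virtual character $\phi=\sum_{\chi\in\mathrm{Irr}(G)}a_\chi\chi$ is called non-negative if (a) $\mathrm{Re}(\phi(h))\ge0$ for all $h\in G$, and (b) all coefficients $a_\chi$ are non-negative real numbers and at least one is non-zero. *)

From HB Require Import structures.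
From mathcomp Require Import all_boot all_order all_algebra all_fingroup all_solvable all_field all_character.
Set Implicit Arguments. Unset Strict Implicit. Unset Printing Implicit Defensive.
Import Order.TTheory GRing.Theory Num.Theory.
Local Open Scope ring_scope.

Definition vchar_of (gT : finGroupType) (G : {group gT}) (a : Iirr G -> algC) : 'CF(G) :=
  \sum_(i : Iirr G) a i *: 'chi[G]_i.

Definition xi (gT : finGroupType) (G : {group gT}) (phi : 'CF(G)) (g x y : gT) : algC :=
  'Re (phi (([~ x, y])^-1 * g)%g).

(* Expectation w.r.t. the uniform probability on G x G. *)
Definition Exi (gT : finGroupType) (G : {group gT}) (phi : 'CF(G)) (g : gT) : algC :=
  (#|G| ^ 2)%:R^-1 * \sum_(x in G) \sum_(y in G) xi phi g x y.

Definition cprob (gT : finGroupType) (G : {group gT}) (g : gT) : algC :=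
  #|[set p in setX G G | ([~ p.1, p.2])%g == g]|%:R / (#|G| ^ 2)%:R.

Definition nonneg_vchar (gT : finGroupType) (G : {group gT}) (a : Iirr G -> algC) : Prop :=
  (forall h, h \in G -> 0 <= 'Re (vchar_of a h)) /\
  (forall i, 0 <= a i) /\ (exists i, a i != 0).

(* Summing an irreducible character over the conjugates of an element and using
   the generalized orthogonality relation gives
   sum_{x,y} chi([x,y]^-1 g) = |G|^2 chi(g) / chi(1)^2, and linearity yields the
   expectation of xi_{g,phi}.  When Re phi >= 0 on G, dropping the pairs with
   [x,y] <> g from that expectation leaves c(g) phi(1), hence the bound. *)
From HB Require Import structures.
From mathcomp Require Import all_boot all_order all_algebra all_fingroup all_solvable all_field all_character.
From mathcomp Require Import ring.
Import Order.TTheory GRing.Theory Num.Theory.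
Local Open Scope ring_scope.

Section CommutatorCharacterSums.
Local Set Implicit Arguments. Local Unset Strict Implicit.
Context {gT : finGroupType} {G : {group gT}}.
Implicit Types (a : Iirr G -> algC) (phi : 'CF(G)).

Lemma cfunMC (phi : 'CF(G)) u v : u \in G -> phi (u * v)%g = phi (v * u)%g.
Proof.
move=> Gu; rewrite -(cfunJ phi (u * v)%g Gu); congr (phi _).
by rewrite conjgE !mulgA mulVg mul1g.
Qed.

Lemma sum_irr_mulJ (i : Iirr G) u v : u \in G -> v \in G ->
  \sum_(y in G) 'chi_i (u * v ^ y)%g = #|G|%:R * 'chi_i u * 'chi_i v / 'chi_i 1%g.
Proof.
move=> Gu Gv.
pose F x := if x \in G then \sum_(y in G) 'chi_i (x * v ^ y)%g else 0.
have F_class : is_class_fun <<G>>%g (finfun F).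
  rewrite genGid; apply: intro_class_fun => [x z Gx Gz|x nGx]; last first.
    by rewrite /F (negbTE nGx).
  rewrite /F groupJ // Gx; symmetry; rewrite (reindex_inj (mulIg z^-1%g)) /=.
  apply: eq_big => [y|y Gy]; first by rewrite groupMr ?groupV.
  by rewrite -(cfunJ _ (x ^ z * v ^ y)%g (groupVr Gz)) conjMg -conjgM mulgV conjg1 -conjgM.
pose f : 'CF(G) := Cfun 0 F_class.
have fE x : f x = F x by rewrite cfunE.
have f_dot j : '[f, 'chi_j] = (i == j)%:R * (#|G|%:R * 'chi_i v / 'chi_i 1%g).
  rewrite cfdotE.
  under eq_bigr => x Gx do rewrite fE /F Gx -irr_inv big_distrl /=.
  rewrite exchange_big /= big_distrr /=.
  under eq_bigr => y Gy do rewrite generalized_orthogonality_relation (cfunJ _ _ Gy).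
  by rewrite sumr_const -mulr_natr; ring.
have := congr1 (fun phi : 'CF(G) => phi u) (cfun_sum_cfdot f).
rewrite fE /F Gu => ->; rewrite sum_cfunE (bigD1 i) //= big1 => [|j nij]; last first.
  by rewrite cfunE f_dot eq_sym (negbTE nij) !mul0r.
by rewrite addr0 cfunE f_dot eqxx mul1r; ring.
Qed.

Lemma sum_irr_commg (i : Iirr G) g : g \in G ->
  \sum_(x in G) \sum_(y in G) 'chi_i ([~ x, y]^-1 * g)%g
  = (#|G| ^ 2)%:R * 'chi_i g / 'chi_i 1%g ^+ 2.
Proof.
move=> Gg.
have commgVM x y : ([~ x, y]^-1 * g = x^-1 ^ y * (x * g))%g.
  by rewrite /commg invMg invgK conjVg !mulgA.
have inner x : x \in G -> \sum_(y in G) 'chi_i ([~ x, y]^-1 * g)%g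
    = #|G|%:R / 'chi_i 1%g * ('chi_i (x * g)%g * 'chi_i x^-1%g).
  move=> Gx; rewrite (eq_bigr (fun y => 'chi_i (x^-1 ^ y * (x * g))%g)); last first.
    by move=> y Gy; rewrite commgVM.
  under eq_bigr => y Gy do rewrite cfunMC ?groupJ ?groupV //.
  by rewrite sum_irr_mulJ ?groupM ?groupV //; ring.
rewrite (eq_bigr _ inner) -big_distrr /=.
have := generalized_orthogonality_relation g i i.
rewrite eqxx mul1r => /(canRL (mulVKf (neq0CG G))) ->.
by rewrite natrX; field; rewrite irr1_neq0.
Qed.

Lemma vchar_ofE a h : vchar_of a h = \sum_i a i * 'chi_i h.
Proof. by rewrite sum_cfunE; apply: eq_bigr => i _; rewrite cfunE. Qed.

Lemma sum_vchar_commg a g : g \in G ->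
  \sum_(x in G) \sum_(y in G) vchar_of a ([~ x, y]^-1 * g)%g
  = (#|G| ^ 2)%:R * \sum_i a i / 'chi_i 1%g ^+ 2 * 'chi_i g.
Proof.
move=> Gg; under eq_bigr => x _ do under eq_bigr => y _ do rewrite vchar_ofE.
under eq_bigr => x _ do rewrite exchange_big /=.
rewrite exchange_big big_distrr; apply: eq_bigr => i _ /=.
under eq_bigr => x _ do rewrite -big_distrr.
by rewrite -big_distrr sum_irr_commg //=; ring.
Qed.

Lemma Exi_vchar a g : (forall i, a i \is Num.real) -> g \in G ->
  Exi (vchar_of a) g = \sum_i a i / 'chi_i 1%g ^+ 2 * 'Re ('chi_i g).
Proof.
move=> a_real Gg; rewrite /Exi /xi.
under eq_bigr => x _ do rewrite -raddf_sum.
have G2_real : ((#|G| ^ 2)%:R^-1 : algC) \is Num.real by rewrite rpredV realn.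
rewrite -raddf_sum sum_vchar_commg // -(ReMl G2_real) mulKf; last first.
  by rewrite natrX expf_neq0 ?neq0CG.
rewrite raddf_sum; apply: eq_bigr => i _ /=.
have chi1_real : ('chi_i 1%g ^+ 2)^-1 \is Num.real.
  by rewrite rpredV rpredX ?gtr0_real ?irr1_gt0.
by rewrite (ReMl (rpredM (a_real i) chi1_real)).
Qed.

Lemma cprob_mulRe1_le_Exi phi g : g \in G ->
  (forall h, h \in G -> 0 <= 'Re (phi h)) ->
  cprob G g * 'Re (phi 1%g) <= Exi phi g.
Proof.
move=> Gg phi_ge0; set S := [set p in setX G G | [~ p.1, p.2] == g]%g.
have sum_ge : #|S|%:R * 'Re (phi 1%g) <= \sum_(x in G) \sum_(y in G) xi phi g x y.
  rewrite pair_big /= (bigID (mem S)) /=.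
  have -> : \sum_(p | (p.1 \in G) && (p.2 \in G) && (p \in S)) xi phi g p.1 p.2
           = \sum_(p in S) 'Re (phi 1%g).
    apply: eq_big => [p|p]; first by rewrite !inE andb_idl // => /andP[].
    by rewrite !inE => /andP[_ /andP[_ /eqP <-]]; rewrite /xi mulVg.
  rewrite sumr_const mulr_natl lerDl; apply: sumr_ge0 => p /andP[/andP[G1 G2] _].
  by rewrite /xi phi_ge0 ?groupM ?groupV ?groupR.
rewrite /cprob /Exi -/S mulrAC [X in _ <= X]mulrC.
by rewrite ler_wpM2r // invr_ge0 ler0n.
Qed.

Lemma vchar1_gt0 a : (forall i, 0 <= a i) -> (exists i, a i != 0) ->
  0 < vchar_of a 1%g.
Proof.
move=> a_ge0 [k ak_neq0]; rewrite vchar_ofE (bigD1 k) //= ltr_wpDr //.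
  by apply: sumr_ge0 => i _; rewrite mulr_ge0 ?a_ge0 ?ltW ?irr1_gt0.
by rewrite mulr_gt0 ?irr1_gt0 // lt_def ak_neq0 a_ge0.
Qed.

End CommutatorCharacterSums.

Theorem theorem1 (gT : finGroupType) (G : {group gT}) (a : Iirr G -> algC) :
  (forall i, a i \is Num.real) ->
  (forall g, g \in G ->
     Exi (vchar_of a) g
     = \sum_(i : Iirr G) a i / ('chi[G]_i 1%g) ^+ 2 * 'Re ('chi[G]_i g)) /\
  (nonneg_vchar a ->
     (forall g, g \in G ->
        cprob G g <= Exi (vchar_of a) g / vchar_of a 1%g /\
        Exi (vchar_of a) g / vchar_of a 1%g
        = (\sum_(i : Iirr G) a i / ('chi[G]_i 1%g) ^+ 2 * 'Re ('chi[G]_i g))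
          / (\sum_(i : Iirr G) a i * 'chi[G]_i 1%g)) /\
     cprob G 1%g
       <= (\sum_(i : Iirr G) a i / 'chi[G]_i 1%g)
          / (\sum_(i : Iirr G) a i * 'chi[G]_i 1%g)).
Proof.
move=> a_real; split=> [g Gg|[phi_ge0 [a_ge0 a_neq0]]]; first exact: Exi_vchar.
have phi1_gt0 := vchar1_gt0 a_ge0 a_neq0.
have cprob_le g : g \in G -> cprob G g <= Exi (vchar_of a) g / vchar_of a 1%g.
  move=> Gg; rewrite ler_pdivlMr //.
  by have := cprob_mulRe1_le_Exi Gg phi_ge0; rewrite (Creal_ReP _ (gtr0_real phi1_gt0)).
have ExiE g : g \in G -> Exi (vchar_of a) g / vchar_of a 1%g
    = (\sum_i a i / 'chi_i 1%g ^+ 2 * 'Re ('chi_i g)) / (\sum_i a i * 'chi_i 1%g).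
  by move=> Gg; rewrite Exi_vchar // vchar_ofE.
have at1 : \sum_i a i / 'chi_i 1%g ^+ 2 * 'Re ('chi_i 1%g) = \sum_i a i / 'chi_i 1%g.
  apply: eq_bigr => i _; rewrite (Creal_ReP _ (gtr0_real (irr1_gt0 i))).
  by field; rewrite irr1_neq0.
split=> [g Gg|]; first by split; [apply: cprob_le | apply: ExiE].
by rewrite -at1 -ExiE ?cprob_le.
Qed.
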